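(* Let $q=p^n$ be a prime power with $q\equiv 5\pmod 8$, let $\chi$ be a generator of the cyclic group $\widehat{\mathbb{F}_q^{\times}}$ of multiplicative characters of $\mathbb{F}_q$, and let $1\le r\le q-2$ be an integer. Let $a_1,\dots,a_{(q-1)/4}$ be the distinct elements of $D_4=\{x^4:x\in\mathbb{F}_q^{\times}\}$ (in any fixed order) and let $$B_{q,4}(\chi^r):=\left[\chi^r(a_i+a_j)+\chi^r(a_i-a_j)\right]_{1\le i,j\le (q-1)/4}.$$ Then $$\det(B_{q,4}(\chi^r))=(-1)^r\left(\frac{q}{2}\right)^{\frac{q-1}{4}}\prod_{k=0}^{(q-5)/4}\ {}_{2}F_{1}\left(\begin{array}{cc}\chi^{-r} & \chi^{4k}\\ & \chi^{4k+r}\end{array}\Bigg|\,-1\right)_q.$$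
   Context: Every multiplicative character $\psi$ of $\mathbb{F}_q$ is extended to $\mathbb{F}_q$ by $\psi(0)=0$ (including the trivial character). For characters $A,B$, the Jacobi sum is $J_q(A,B)=\sum_{x\in\mathbb{F}_q}A(x)B(1-x)$, and Greene's binomial coefficient is $\binom{A}{B}:=\frac{B(-1)}{q}J_q(A,\bar B)$, where $\bar B=B^{-1}$. For characters $A_0,A_1,B_1$ and $x\in\mathbb{F}_q$, Greene's Gaussian hypergeometric function is $${}_{2}F_{1}\left(\begin{array}{cc}A_0 & A_1\\ & B_1\end{array}\Bigg|\,x\right)_q:=\frac{q}{q-1}\sum_{\psi\in\widehat{\mathbb{F}_q^{\times}}}\binom{A_0\psi}{\psi}\binom{A_1\psi}{B_1\psi}\psi(x).$$ *)

From mathcomp Require Import all_boot all_order all_algebra all_field.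
Set Implicit Arguments. Unset Strict Implicit. Unset Printing Implicit Defensive.
Import Order.TTheory GRing.Theory Num.Theory.
Local Open Scope ring_scope.

(* Multiplicative characters of a finite field F, valued in algC, extended by
   psi(0) = 0 (also for the trivial character). *)
Section Chars.
Variable F : finFieldType.

Definition mult_char (psi : F -> algC) : Prop :=
  [/\ psi 0 = 0, psi 1 = 1 & forall x y, psi (x * y) = psi x * psi y].

Definition charpow (psi : F -> algC) (k : nat) : F -> algC :=
  fun x => if x == 0 then 0 else psi x ^+ k.

Definition charinv (psi : F -> algC) : F -> algC :=
  fun x => if x == 0 then 0 else (psi x)^-1.

Definition charmul (A B : F -> algC) : F -> algC := fun x => A x * B x.

Definition char_generator (chi : F -> algC) : Prop :=
  mult_char chi /\
  forall psi, mult_char psi -> exists k : nat, forall x, psi x = charpow chi k x.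

Definition jacobi (A B : F -> algC) : algC := \sum_(x : F) A x * B (1 - x).

Definition gbinom (A B : F -> algC) : algC :=
  B (-1) / (#|F|%:R) * jacobi A (charinv B).

(* Greene's 2F1; the sum over the character group is written as a sum over
   the powers chi^k, 0 <= k < q-1, of a generator chi. *)
Definition hyp2F1 (chi : F -> algC) (A0 A1 B1 : F -> algC) (x : F) : algC :=
  (#|F|%:R / (#|F|.-1)%:R) *
  \sum_(k < #|F|.-1)
     gbinom (charmul A0 (charpow chi k)) (charpow chi k) *
     gbinom (charmul A1 (charpow chi k)) (charmul B1 (charpow chi k)) *
     charpow chi k x.

Definition D4 (x : F) : Prop := exists y : F, y != 0 /\ x = y ^+ 4.

End Chars.

From mathcomp Require Import all_boot all_order all_algebra all_field.
From mathcomp Require Import cyclic zify ring.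
Set Implicit Arguments. Unset Strict Implicit. Unset Printing Implicit Defensive.
Import Order.TTheory GRing.Theory Num.Theory.
Local Open Scope ring_scope.

(* D4 is the subgroup of odd order m = (q-1)/4 of the cyclic group F^x, so -1 is
   not in D4 and D4 is closed under division.  Writing R = chi^r, the matrix is
   diag(R a_i) times H = [R(1 + a_j/a_i) + R(1 - a_j/a_i)], and the m characters
   x |-> chi(x)^(2k) of D4 are eigenvectors of H, with eigenvalues
   mu_k = sum_(x in D4) (R(1+x) + R(1-x)) chi(x)^(2k); they are linearly
   independent (Vandermonde) because chi^2 separates the points of D4.  Hence
   det = prod_i R(a_i) * prod_k mu_k, where prod_i R(a_i) = R(prod D4) = R(1) = 1.
   Parametrising F^x by powers of a generator, 2 mu_k = sum_y chi^(4k)(y) R(1-y) R(1+y),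
   and expanding Greene's binomial coefficients as Jacobi sums and summing over
   the characters (orthogonality) identifies this sum with
   (-1)^r q 2F1(chi^-r, chi^(4k); chi^(4k+r) | -1). *)

Lemma big_enum_set (R : Type) (idx : R) (op : Monoid.com_law idx) (T : finType)
    n (f : 'I_n -> T) (A : {set T}) (G : T -> R) :
  injective f -> (forall i, f i \in A) -> #|A| = n ->
  \big[op/idx]_(x in A) G x = \big[op/idx]_(i < n) G (f i).
Proof.
move=> f_inj fA cardA.
have -> : A = f @: setT.
  apply/eqP; rewrite eq_sym eqEcard card_imset // cardsT card_ord cardA leqnn.
  by rewrite andbT; apply/subsetP => _ /imsetP[i _ ->].
by rewrite big_imset /=; [apply: eq_bigl => i; rewrite inE | move=> i j _ _ /f_inj].
Qed.

Lemma sum_ord_mul_blocks (V : nmodType) n k (phi : nat -> V) :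
  \sum_(e < (n * k)%N) phi e = \sum_(s < n) \sum_(t < k) phi (t + s * k)%N.
Proof.
rewrite -(big_mkord xpredT) big_nat_mul big_mkord; apply: eq_bigr => s _.
by rewrite -{1}[(s * k)%N]add0n big_addn mulSn addnK big_mkord.
Qed.

Lemma sum_periodic_coprime_mul (V : nmodType) n c (phi : nat -> V) :
  (forall t, phi (t + n)%N = phi t) -> coprime c n ->
  \sum_(t < n) phi (c * t)%N = \sum_(t < n) phi t.
Proof.
move=> phi_per c_coprime; have [-> | n_gt0] := posnP n; first by rewrite !big_ord0.
have phi_mod t : phi t = phi (t %% n)%N.
  rewrite {1}(divn_eq t n); elim: (t %/ n)%N => [|d IHd]; first by rewrite mul0n add0n.
  by rewrite mulSn -addnA addnC phi_per.
pose mul_c (t : 'I_n) := Ordinal (ltn_pmod (c * t)%N n_gt0).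
have mul_c_inj : injective mul_c.
  move=> s t; wlog le_st : s t / (s <= t)%N.
    by move=> le_inj; case: (leqP s t) => [/le_inj | /ltnW/le_inj le_inj' /esym/le_inj'].
  move=> /(congr1 val) /= /eqP; rewrite eq_sym eqn_mod_dvd ?leq_mul2l ?le_st ?orbT //.
  rewrite -mulnBr Gauss_dvdr 1?coprime_sym // /dvdn modn_small; last first.
    exact: leq_ltn_trans (leq_subr s t) (ltn_ord t).
  by rewrite subn_eq0 => le_ts; apply/val_inj/anti_leq; rewrite le_st le_ts.
rewrite [RHS](reindex_inj mul_c_inj); apply: eq_bigr => t _; exact: phi_mod.
Qed.

Section FinFieldUnits.
Variable F : finFieldType.
Local Notation N := #|F|.-1.

Lemma card_units_gt0 : (0 < N)%N.
Proof. by rewrite -ltnS prednK ?finNzRing_gt1 // ltnW // finNzRing_gt1. Qed.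

Lemma natr_card_neq0 : #|F|%:R != 0 :> algC.
Proof. by rewrite pnatr_eq0 -lt0n (ltnW (finNzRing_gt1 F)). Qed.

Lemma natr_card_units_neq0 : N%:R != 0 :> algC.
Proof. by rewrite pnatr_eq0 -lt0n card_units_gt0. Qed.

Lemma expf_card_unit (x : F) : x != 0 -> x ^+ N = 1.
Proof.
move=> x_neq0; apply: (mulfI x_neq0).
by rewrite -exprS prednK ?expf_card ?mulr1 // ltnW // finNzRing_gt1.
Qed.

Lemma finField_prim_root_exists : exists g : F, N.-primitive_root g.
Proof.
have /hasP[g _ g_prim] : has N.-primitive_root (enum (predC1 (0 : F))).
  apply: has_prim_root card_units_gt0 _ (enum_uniq _) _.
    by apply/allP => x; rewrite mem_enum unity_rootE => /expf_card_unit ->.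
  by rewrite -cardE cardC1.
by exists g.
Qed.

Section PrimitiveRoot.
Variable g : F.
Hypothesis g_prim : N.-primitive_root g.

Lemma prim_root_neq0 : g != 0.
Proof. by rewrite (prim_root_eq0 g_prim) -lt0n card_units_gt0. Qed.

Lemma unit_prim_root_exp (x : F) : x != 0 -> exists e : 'I_N, x = g ^+ e.
Proof. by move=> /expf_card_unit/(prim_rootP g_prim)[e ->]; exists e. Qed.

Lemma sum_prim_root_exp (G : F -> algC) :
  G 0 = 0 -> \sum_x G x = \sum_(e < N) G (g ^+ e).
Proof.
move=> G0; rewrite (bigD1 0) //= G0 add0r.
rewrite (eq_bigl (mem [set~ 0])) => [|x]; last by rewrite !inE.
apply: big_enum_set; last by rewrite cardsC1.
  by move=> e e' /eqP; rewrite (eq_prim_root_expr g_prim) !modn_small // => /eqP/val_inj.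
by move=> e; rewrite !inE expf_neq0 // prim_root_neq0.
Qed.

End PrimitiveRoot.
End FinFieldUnits.

Section GeneratingCharacter.
Variables (F : finFieldType) (chi : F -> algC).
Hypothesis chi_gen : char_generator chi.
Local Notation N := #|F|.-1.

Lemma chi0 : chi 0 = 0. Proof. by case: chi_gen => -[]. Qed.
Lemma chi1 : chi 1 = 1. Proof. by case: chi_gen => -[]. Qed.
Lemma chiM x y : chi (x * y) = chi x * chi y. Proof. by case: chi_gen => -[]. Qed.

Lemma chiX x n : chi (x ^+ n) = chi x ^+ n.
Proof. by elim: n => [|n IHn]; rewrite ?chi1 // !exprS chiM IHn. Qed.

Lemma chi_neq0 x : x != 0 -> chi x != 0.
Proof.
move=> x_neq0; apply: contraTneq isT => chix0.
by have /eqP := chiM x x^-1; rewrite mulfV // chi1 chix0 mul0r oner_eq0.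
Qed.

Lemma chiV x : chi x^-1 = (chi x)^-1.
Proof.
have [->|x_neq0] := eqVneq x 0; first by rewrite invr0 chi0 invr0.
by apply: (mulfI (chi_neq0 x_neq0)); rewrite -chiM !mulfV ?chi1 ?chi_neq0.
Qed.

Lemma chiN_exp_double x k : chi (- x) ^+ (2 * k) = chi x ^+ (2 * k).
Proof. by rewrite -mulN1r chiM exprMn exprM -(chiX (-1)) sqrrN expr1n chi1 expr1n mul1r. Qed.

(* The character g^e |-> z^e, for z a primitive root of unity of order q-1,
   is a power of chi; hence chi separates the units. *)
Lemma chi_eq1 x : x != 0 -> chi x = 1 -> x = 1.
Proof.
move=> x_neq0 chix1.
have [g g_prim] := finField_prim_root_exists F.
have [z z_prim] := C_prim_root_exists (card_units_gt0 F).
pose dlog y : nat := oapp val 0%N [pick e : 'I_N | g ^+ e == y].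
have dlogK y : y != 0 -> g ^+ dlog y = y.
  rewrite /dlog => /(unit_prim_root_exp g_prim)[e ->].
  by case: pickP => [e' /eqP // | /(_ e)]; rewrite eqxx.
have zX_eq1 y : y != 0 -> (z ^+ dlog y == 1) = (y == 1).
  move=> y_neq0; rewrite -(expr0 z) (eq_prim_root_expr z_prim).
  by rewrite -(eq_prim_root_expr g_prim) expr0 dlogK.
pose psi y := if y == 0 then 0 else z ^+ dlog y.
have psi_char : mult_char psi.
  split=> [|| y y']; rewrite /psi ?eqxx ?oner_eq0 //.
    by apply/eqP; rewrite zX_eq1 ?oner_eq0.
  have [->|y_neq0] := eqVneq y 0; first by rewrite !mul0r eqxx.
  have [->|y'_neq0] := eqVneq y' 0; first by rewrite !mulr0 eqxx.
  rewrite mulf_eq0 (negPf y_neq0) (negPf y'_neq0) -exprD; apply/eqP.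
  by rewrite (eq_prim_root_expr z_prim) -(eq_prim_root_expr g_prim) exprD !dlogK ?mulf_neq0.
have [k psiE] := chi_gen.2 psi psi_char.
apply/eqP; rewrite -zX_eq1 //; apply/eqP.
by have := psiE x; rewrite /psi /charpow (negPf x_neq0) chix1 expr1n.
Qed.

Lemma sum_chiX u : u != 0 -> \sum_(k < N) chi u ^+ k = (u == 1)%:R * N%:R.
Proof.
move=> u_neq0; have [->|u_neq1] := eqVneq u 1.
  by rewrite chi1 mul1r; under eq_bigr do rewrite expr1n; rewrite sumr_const card_ord.
have chiu_neq1 : chi u - 1 != 0.
  by rewrite subr_eq0; apply: contra_neq u_neq1; apply: chi_eq1.
apply: (mulfI chiu_neq1); rewrite -subrX1 -chiX expf_card_unit // chi1.
by rewrite subrr mul0r mulr0.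
Qed.

Lemma chiN1 : (-1 : F) != 1 -> chi (-1) = -1.
Proof.
move=> N1_neq1; have : (chi (-1) - 1) * (chi (-1) + 1) == 0.
  by rewrite -subr_sqr -chiX sqrrN !expr1n chi1 subrr.
rewrite mulf_eq0 subr_eq0 addr_eq0 => /orP[/eqP/chi_eq1 N1_eq1 | /eqP //].
by rewrite N1_eq1 ?eqxx ?oppr_eq0 ?oner_eq0 in N1_neq1.
Qed.

Lemma charpow_unit k x : x != 0 -> charpow chi k x = chi x ^+ k.
Proof. by rewrite /charpow => /negPf->. Qed.

Lemma charpow_at0 k : charpow chi k 0 = 0.
Proof. by rewrite /charpow eqxx. Qed.

Lemma charpowM k x y : charpow chi k (x * y) = charpow chi k x * charpow chi k y.
Proof.
have [->|x_neq0] := eqVneq x 0; first by rewrite mul0r charpow_at0 mul0r.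
have [->|y_neq0] := eqVneq y 0; first by rewrite mulr0 charpow_at0 mulr0.
by rewrite !charpow_unit ?mulf_neq0 // chiM exprMn.
Qed.

Lemma charpow1 k : charpow chi k 1 = 1.
Proof. by rewrite charpow_unit ?oner_eq0 // chi1 expr1n. Qed.

End GeneratingCharacter.

Lemma charinv_unit (F : finFieldType) (B : F -> algC) x :
  x != 0 -> charinv B x = (B x)^-1.
Proof. by rewrite /charinv => /negPf->. Qed.

Lemma charinv_at0 (F : finFieldType) (B : F -> algC) : charinv B 0 = 0.
Proof. by rewrite /charinv eqxx. Qed.

Section HypergeometricAtMinusOne.
Variables (F : finFieldType) (chi : F -> algC) (r j : nat).
Hypothesis chi_gen : char_generator chi.
Local Notation q := #|F|.
Local Notation N := #|F|.-1.
Local Notation A0 := (charinv (charpow chi r)).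
Local Notation A1 := (charpow chi j).
Local Notation B1 := (charpow chi (j + r)).

(* The k-th term of 2F1(A0, A1; B1 | -1), with both binomial coefficients written as
   Jacobi sums, is q^-2 * sum_(y, z) hyp_kernel y z * chi (hyp_kernel_arg y z) ^+ k;
   summing over k, orthogonality keeps the pairs with y = hyp_kernel_root z. *)
Definition hyp_kernel (y z : F) : algC :=
  A0 y * charpow chi 0 (1 - y) * B1 (-1) * A1 z * charinv B1 (1 - z).

Definition hyp_kernel_arg (y z : F) : F := - (y * z) / ((1 - y) * (1 - z)).

Definition hyp_kernel_root (z : F) : F := (z - 1) / (z + z - 1).

Lemma hyp_kernel_support y z :
  hyp_kernel y z != 0 -> [/\ y != 0, 1 - y != 0, z != 0 & 1 - z != 0].
Proof.
move=> K_neq0; apply/and4P; rewrite -!negb_or; apply: contra K_neq0.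
by case/or4P=> /eqP E; rewrite /hyp_kernel E ?charinv_at0 ?charpow_at0 ?(mul0r, mulr0).
Qed.

Lemma jacobi_summands_kernel (k : nat) y z :
  charpow chi k (-1) * charpow chi k (-1) * charmul B1 (charpow chi k) (-1) *
  (charmul A0 (charpow chi k) y * charinv (charpow chi k) (1 - y) *
   (charmul A1 (charpow chi k) z * charinv (charmul B1 (charpow chi k)) (1 - z)))
  = hyp_kernel y z * chi (hyp_kernel_arg y z) ^+ k.
Proof.
rewrite /hyp_kernel /hyp_kernel_arg /charmul.
have [/or4P|] := boolP [|| y == 0, 1 - y == 0, z == 0 | 1 - z == 0].
  by case=> /eqP E; rewrite E ?(charinv_at0, charpow_at0, mul0r, mulr0).
rewrite !negb_or => /and4P[y_neq0 y1_neq0 z_neq0 z1_neq0].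
have N1_neq0 : (-1 : F) != 0 by rewrite oppr_eq0 oner_eq0.
rewrite !charinv_unit ?charpow_unit // ?mulf_neq0 // expr0 mulr1.
rewrite -[- (y * z)]mulN1r !(chiM chi_gen) (chiV chi_gen) (chiM chi_gen) !exprMn !exprVn !exprMn.
have chiN1_sqr : chi (-1) ^+ k * chi (-1) ^+ k = 1.
  by rewrite -exprMn -expr2 -(chiX chi_gen) sqrrN expr1n (chi1 chi_gen) expr1n.
rewrite -[RHS]mulr1 -chiN1_sqr; field.
by rewrite !expf_neq0 ?(chi_neq0 chi_gen).
Qed.

Lemma gbinom_prod_kernel (k : nat) :
  gbinom (charmul A0 (charpow chi k)) (charpow chi k) *
  gbinom (charmul A1 (charpow chi k)) (charmul B1 (charpow chi k)) * charpow chi k (-1)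
  = (q%:R ^+ 2)^-1 * \sum_y \sum_z hyp_kernel y z * chi (hyp_kernel_arg y z) ^+ k.
Proof.
have regroup (a b c : algC) (X Z : F -> algC) :
    a * (\sum_y X y) * (b * \sum_z Z z) * c = \sum_y \sum_z a * b * c * (X y * Z z).
  under [RHS]eq_bigr do rewrite -mulr_sumr.
  by rewrite -mulr_sumr -big_distrlr /=; ring.
rewrite /gbinom /jacobi regroup mulr_sumr; apply: eq_bigr => y _.
rewrite mulr_sumr; apply: eq_bigr => z _.
rewrite -jacobi_summands_kernel; field.
by rewrite natr_card_neq0.
Qed.

Lemma hyp2F1_N1_kernel_sum :
  hyp2F1 chi A0 A1 B1 (-1) =
  (q%:R * N%:R)^-1 * \sum_(k < N) \sum_y \sum_z hyp_kernel y z * chi (hyp_kernel_arg y z) ^+ k.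
Proof.
rewrite /hyp2F1; under eq_bigr => k _ do rewrite gbinom_prod_kernel.
rewrite -mulr_sumr mulrA; congr (_ * _).
by field; rewrite natr_card_neq0 natr_card_units_neq0.
Qed.

Lemma hyp_kernel_arg_eq1 y z : y != 0 -> 1 - y != 0 -> 1 - z != 0 ->
  (hyp_kernel_arg y z == 1) = (y == hyp_kernel_root z).
Proof.
move=> y_neq0 y1_neq0 z1_neq0.
have den_neq0 : (1 - y) * (1 - z) != 0 by rewrite mulf_neq0.
rewrite /hyp_kernel_arg /hyp_kernel_root (can2_eq (divfK den_neq0) (mulfK den_neq0)).
rewrite mul1r -subr_eq0.
have -> : - (y * z) - (1 - y) * (1 - z) = - (y * (z + z - 1) - (z - 1)) by ring.
rewrite oppr_eq0 subr_eq0; have [->|lin_neq0] := eqVneq (z + z - 1) 0.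
  by rewrite mulr0 invr0 mulr0 (negPf y_neq0) eq_sym -oppr_eq0 opprB (negPf z1_neq0).
by rewrite (can2_eq (mulfK lin_neq0) (divfK lin_neq0)).
Qed.

Lemma sum_hyp_kernel_chiX y z :
  \sum_(k < N) hyp_kernel y z * chi (hyp_kernel_arg y z) ^+ k =
  (y == hyp_kernel_root z)%:R * hyp_kernel y z * N%:R.
Proof.
have [->|/hyp_kernel_support[y_neq0 y1_neq0 z_neq0 z1_neq0]] := eqVneq (hyp_kernel y z) 0.
  by rewrite big1 ?mulr0 ?mul0r // => k _; rewrite mul0r.
have arg_neq0 : hyp_kernel_arg y z != 0.
  by rewrite !mulf_neq0 ?oppr_eq0 ?invr_eq0 ?mulf_neq0.
by rewrite -mulr_sumr (sum_chiX chi_gen) // hyp_kernel_arg_eq1 // mulrCA mulrA.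
Qed.

(* The Moebius map y / (1 + y), patched at its pole so that it permutes F. *)
Definition hyp_subst (y : F) : F := if y == -1 then 1 else y / (1 + y).

Lemma hyp_subst_inj : injective hyp_subst.
Proof.
have den_neq0 (y : F) : y != -1 -> 1 + y != 0 by rewrite addrC addr_eq0.
have frac_neq1 (y : F) : y != -1 -> y / (1 + y) != 1.
  move=> yN1; rewrite (can2_eq (divfK (den_neq0 y yN1)) (mulfK (den_neq0 y yN1))).
  by rewrite mul1r -subr_eq0 opprD addrCA subrr addr0 oppr_eq0 oner_eq0.
move=> y y'; rewrite /hyp_subst.
have [->|yN1] := eqVneq y (-1); have [->|y'N1] := eqVneq y' (-1) => //.
- by move=> /esym/eqP; rewrite (negPf (frac_neq1 _ y'N1)).
- by move=> /eqP; rewrite (negPf (frac_neq1 _ yN1)).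
move/eqP; rewrite eqr_div ?den_neq0 // => /eqP eq_cross.
apply/eqP; rewrite -subr_eq0.
have -> : y - y' = y * (1 + y') - y' * (1 + y) by ring.
by rewrite eq_cross subrr.
Qed.

Lemma hyp_kernel_subst y :
  hyp_kernel (hyp_kernel_root (hyp_subst y)) (hyp_subst y) =
  chi (-1) ^+ (j + r) * (A1 y * charpow chi r (1 - y) * charpow chi r (1 + y)).
Proof.
rewrite /hyp_subst /hyp_kernel /hyp_kernel_root.
have [->|yN1] := eqVneq y (-1).
  by rewrite subrr !(charinv_at0, charpow_at0, mulr0).
have [->|y_neq0] := eqVneq y 0; first by rewrite !(charpow_at0, mulr0, mul0r).
have y1'_neq0 : 1 + y != 0 by rewrite addrC addr_eq0.
have [y1|y_neq1] := eqVneq y 1.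
  have half_root : (y / (1 + y) + y / (1 + y) - 1) = 0.
    by rewrite -mulrDl y1 divff ?subrr // -{2}y1.
  by rewrite half_root invr0 mulr0 y1 subrr !(charinv_at0, charpow_at0, mulr0, mul0r).
have y1_neq0 : 1 - y != 0 by rewrite subr_eq0 eq_sym.
have -> : 1 - y / (1 + y) = (1 + y)^-1 by field.
have -> : (y / (1 + y) - 1) / (y / (1 + y) + y / (1 + y) - 1) = (1 - y)^-1.
  field; rewrite y1_neq0 y1'_neq0 -[y + y + _](_ : y - 1 = _) ?subr_eq0 //; ring.
have -> : 1 - (1 - y)^-1 = - y / (1 - y) by field.
have N1_neq0 : (-1 : F) != 0 by rewrite oppr_eq0 oner_eq0.
rewrite !charinv_unit ?charpow_unit ?invr_eq0 ?mulf_neq0 ?oppr_eq0 ?invr_eq0 ?oner_neq0 //.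
rewrite expr0 mulr1 !(chiM chi_gen) !(chiV chi_gen) !exprMn !exprVn !exprD.
by field; rewrite ?oner_neq0 ?expf_neq0 ?(chi_neq0 chi_gen).
Qed.

Lemma hyp2F1_at_N1 :
  hyp2F1 chi A0 A1 B1 (-1) =
  chi (-1) ^+ (j + r) / q%:R *
  \sum_y A1 y * charpow chi r (1 - y) * charpow chi r (1 + y).
Proof.
rewrite hyp2F1_N1_kernel_sum exchange_big /=.
under eq_bigr => y _ do rewrite exchange_big /=.
under eq_bigr => y _ do under eq_bigr => z _ do rewrite sum_hyp_kernel_chiX.
rewrite exchange_big /=.
have pick_root z : \sum_y (y == hyp_kernel_root z)%:R * hyp_kernel y z * N%:R =
                   hyp_kernel (hyp_kernel_root z) z * N%:R.
  rewrite (bigD1 (hyp_kernel_root z)) //= eqxx mul1r big1 ?addr0 // => y /negPf->.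
  by rewrite !mul0r.
under eq_bigr do rewrite pick_root.
rewrite (reindex_inj hyp_subst_inj) -mulr_suml.
rewrite (eq_bigr _ (fun y _ => hyp_kernel_subst y)).
by rewrite -mulr_sumr; field; rewrite natr_card_neq0 natr_card_units_neq0.
Qed.

End HypergeometricAtMinusOne.

Section SumDiffDeterminant.
Variables (F : finFieldType) (chi : F -> algC) (r m : nat).
Variables (S : {set F}) (a : 'I_m -> F).
Hypothesis chi_gen : char_generator chi.
Hypotheses (S_neq0 : 0 \notin S) (S_N1 : -1 \notin S).
Hypothesis S_div : {in S &, forall x y, x / y \in S}.
Hypotheses (a_inj : injective a) (a_S : forall i, a i \in S) (card_S : #|S| = m).
Local Notation R := (charpow chi r).

Definition sum_diff_eigenvalue (k : nat) : algC :=
  \sum_(x in S) (R (1 + x) + R (1 - x)) * chi x ^+ (2 * k).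

Let a_neq0 i : a i != 0.
Proof. by apply: contraNneq S_neq0 => <-. Qed.

Lemma det_chi_sqr_vandermonde : \det (\matrix_(i < m, k < m) chi (a i) ^+ (2 * k)) != 0.
Proof.
have -> : \matrix_(i < m, k < m) chi (a i) ^+ (2 * k) =
          (Vandermonde m (\row_i chi (a i) ^+ 2))^T.
  by apply/matrixP => i k; rewrite !mxE exprM.
rewrite det_tr det_Vandermonde; apply/prodf_neq0 => i _; apply/prodf_neq0 => j ij.
rewrite !mxE subr_eq0; apply/eqP => chi_sqr_eq.
have ratio_sqr : (a j / a i) ^+ 2 = 1.
  apply: (chi_eq1 chi_gen); first by rewrite expf_neq0 ?mulf_neq0 ?invr_eq0 ?a_neq0.
  by rewrite (chiX chi_gen) (chiM chi_gen) (chiV chi_gen) exprMn exprVn chi_sqr_eq divff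
     ?expf_neq0 ?(chi_neq0 chi_gen) ?a_neq0.
move/eqP: ratio_sqr; rewrite sqrf_eq1 => /orP[/eqP ratio1 | /eqP ratioN1].
  by move: ij; rewrite (a_inj (divr1_eq ratio1)) ltnn.
by have := S_div (a_S j) (a_S i); rewrite ratioN1 (negPf S_N1).
Qed.

Lemma sum_diff_mx_eigen :
  \matrix_(i, j) (R (1 + a j / a i) + R (1 - a j / a i)) *m
    \matrix_(i < m, k < m) chi (a i) ^+ (2 * k) =
  \matrix_(i < m, k < m) chi (a i) ^+ (2 * k) *m diag_mx (\row_k sum_diff_eigenvalue k).
Proof.
rewrite mul_mx_diag; apply/matrixP => i k; rewrite !mxE.
have chi_ai_neq0 := chi_neq0 chi_gen (a_neq0 i).
transitivity (chi (a i) ^+ (2 * k) *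
  \sum_j (R (1 + a j / a i) + R (1 - a j / a i)) * chi (a j / a i) ^+ (2 * k)).
  rewrite mulr_sumr; apply: eq_bigr => j _; rewrite !mxE.
  rewrite (chiM chi_gen) (chiV chi_gen) exprMn exprVn; field.
  by rewrite expf_neq0.
congr (_ * _); rewrite /sum_diff_eigenvalue (big_enum_set _ (f := fun j => a j / a i)) //.
  by move=> j j' /(mulIf (invr_neq0 (a_neq0 i)))/a_inj.
by move=> j; apply: S_div.
Qed.

Lemma det_sum_diff_mx :
  \det (\matrix_(i, j) (R (a i + a j) + R (a i - a j))) =
  \prod_i R (a i) * \prod_(k < m) sum_diff_eigenvalue k.
Proof.
have factor_rows : \matrix_(i, j) (R (a i + a j) + R (a i - a j)) =
    diag_mx (\row_i R (a i)) *m \matrix_(i, j) (R (1 + a j / a i) + R (1 - a j / a i)).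
  rewrite mul_diag_mx; apply/matrixP => i j; rewrite !mxE mulrDr -!(charpowM chi_gen).
  by rewrite mulrDr mulrBr mulr1 mulrCA divff ?mulr1 ?a_neq0.
have := congr1 determinant sum_diff_mx_eigen.
rewrite !det_mulmx det_diag [RHS]mulrC => /(mulIf det_chi_sqr_vandermonde) det_H.
rewrite factor_rows det_mulmx det_diag det_H.
by congr (_ * _); apply: eq_bigr => i _; rewrite mxE.
Qed.

End SumDiffDeterminant.

Definition fourth_powers (F : finFieldType) : {set F} := [set y ^+ 4 | y in [set~ 0]].

Section FourthPowers.
Variable F : finFieldType.
Local Notation S4 := (fourth_powers F).

Lemma D4_fourth_powers x : D4 x <-> x \in S4.
Proof.
split=> [[y [y_neq0 ->]] | /imsetP[y]].
  by apply: imset_f; rewrite !inE.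
by rewrite !inE => y_neq0 ->; exists y.
Qed.

Lemma fourth_powers_neq0 : 0 \notin S4.
Proof.
by apply/imsetP => -[y]; rewrite !inE => /negPf y_neq0 /esym/eqP; rewrite expf_eq0 y_neq0.
Qed.

Lemma fourth_powers_div : {in S4 &, forall x y, x / y \in S4}.
Proof.
move=> _ _ /imsetP[u u_neq0 ->] /imsetP[v v_neq0 ->]; rewrite !inE in u_neq0 v_neq0.
by apply/imsetP; exists (u / v); rewrite ?exprMn ?exprVn // !inE mulf_neq0 ?invr_eq0.
Qed.

Variables (g : F) (m : nat).
Hypotheses (g_prim : #|F|.-1.-primitive_root g) (card_F : #|F|.-1 = (4 * m)%N).
Hypothesis m_odd : odd m.

Let m_gt0 : (0 < m)%N. Proof. by case: m m_odd. Qed.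

Let prim_root_exp_half_neq1 : g ^+ (2 * m) != 1.
Proof.
by rewrite -[X in _ != X](expr0 g) (eq_prim_root_expr g_prim) card_F mod0n modn_small; lia.
Qed.

Lemma prim_root_exp_half : g ^+ (2 * m) = -1.
Proof.
have : (g ^+ (2 * m)) ^+ 2 == 1 by rewrite -exprM mulnAC -card_F prim_expr_order.
by rewrite sqrf_eq1 (negPf prim_root_exp_half_neq1) => /eqP.
Qed.

Lemma N1_neq1 : (-1 : F) != 1.
Proof. by rewrite -prim_root_exp_half. Qed.

Lemma prim_root_exp4_mem t : g ^+ (4 * t) \in S4.
Proof.
apply/imsetP; exists (g ^+ t); last by rewrite -exprM mulnC.
by rewrite !inE expf_neq0 ?prim_root_neq0.
Qed.

Lemma prim_root_exp4_inj : injective (fun t : 'I_m => g ^+ (4 * t)).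
Proof.
move=> s t /eqP; rewrite (eq_prim_root_expr g_prim) card_F -!muln_modr eqn_pmul2l //.
by rewrite !modn_small // => /eqP/val_inj.
Qed.

Lemma card_fourth_powers : #|S4| = m.
Proof.
suff -> : S4 = [set g ^+ (4 * t) | t : 'I_m].
  by rewrite card_imset ?card_ord //; apply: prim_root_exp4_inj.
apply/eqP; rewrite eqEsubset; apply/andP; split; apply/subsetP => x; last first.
  by move=> /imsetP[t _ ->]; apply: prim_root_exp4_mem.
move=> /imsetP[y]; rewrite !inE => /(unit_prim_root_exp g_prim)[e ->] ->.
move: (nat_of_ord e) => {}e.
apply/imsetP; exists (Ordinal (ltn_pmod e m_gt0)) => //=.
by apply/eqP; rewrite -exprM (eq_prim_root_expr g_prim) card_F mulnC -!muln_modr modn_mod.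
Qed.

Lemma N1_notin_fourth_powers : -1 \notin S4.
Proof.
apply/imsetP => -[y]; rewrite !inE => y_neq0 N1_eq.
have : (-1 : F) ^+ m = 1 by rewrite N1_eq -exprM -card_F expf_card_unit.
by rewrite -signr_odd m_odd expr1; apply/eqP; rewrite N1_neq1.
Qed.

Lemma prod_fourth_powers : \prod_(x in S4) x = 1.
Proof.
rewrite (big_enum_set _ _ prim_root_exp4_inj prim_root_exp4_mem card_fourth_powers).
rewrite prodrXr -big_distrr /= -(big_mkord xpredT (fun t => t)) bin2_sum bin2.
have -> : (4 * (m * m.-1)./2 = 4 * m * m./2)%N.
  by have := odd_double_half m; rewrite m_odd; lia.
by rewrite exprM -card_F (prim_expr_order g_prim) expr1n.
Qed.
Variables (chi : F -> algC) (r : nat).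
Hypothesis chi_gen : char_generator chi.
Local Notation R := (charpow chi r).

(* Writing y = g ^+ (t + s * m) gives y ^+ 2 = (-1) ^+ s * g ^+ (2 * t), and doubling
   permutes the residues modulo the odd number m. *)
Lemma sum_diff_eigenvalue_fourth_powers k :
  sum_diff_eigenvalue chi r S4 k =
  2%:R^-1 * \sum_y charpow chi (4 * k) y * R (1 - y) * R (1 + y).
Proof.
have two_neq0 : 2%:R != 0 :> algC by rewrite pnatr_eq0.
apply: (mulfI two_neq0); rewrite mulVKf //; apply/esym.
pose Q x := chi x ^+ (2 * k) * R (1 - x).
pose P x := (R (1 + x) + R (1 - x)) * chi x ^+ (2 * k).
have summand_sqr y : y != 0 ->
    charpow chi (4 * k) y * R (1 - y) * R (1 + y) = Q (y ^+ 2).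
  move=> y_neq0; rewrite -mulrA -(charpowM chi_gen) charpow_unit // /Q (chiX chi_gen).
  by rewrite -exprM mulnA; congr (_ * R _); ring.
have block t : \sum_(s < 4) Q ((g ^+ (t + s * m)) ^+ 2) = 2%:R * P (g ^+ (2 * t)).
  have sqr_exp s : (g ^+ (t + s * m)) ^+ 2 = (-1) ^+ s * g ^+ (2 * t).
    rewrite -exprM (_ : ((t + s * m) * 2 = 2 * t + 2 * m * s)%N); last by lia.
    by rewrite exprD (exprM _ (2 * m)) prim_root_exp_half mulrC.
  under eq_bigr do rewrite sqr_exp -signr_odd.
  rewrite !big_ord_recl big_ord0 /= /Q /P !mulN1r !mul1r !(chiN_exp_double chi_gen) opprK.
  by rewrite addr0 mulr2n; ring.
rewrite (sum_prim_root_exp g_prim); last by rewrite charpow_at0 !mul0r.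
under eq_bigr do rewrite summand_sqr ?expf_neq0 ?(prim_root_neq0 g_prim) //.
rewrite card_F (sum_ord_mul_blocks _ _ (fun e => Q ((g ^+ e) ^+ 2))) exchange_big /=.
under eq_bigr do rewrite block.
rewrite -mulr_sumr; congr (_ * _).
rewrite -(@sum_periodic_coprime_mul _ m 2 (fun t => P (g ^+ (2 * t)))) ?coprime2n //; last first.
  by move=> t; rewrite mulnDr exprD prim_root_exp_half mulrN1 /P (chiN_exp_double chi_gen) opprK addrC.
rewrite /sum_diff_eigenvalue.
rewrite (big_enum_set _ _ prim_root_exp4_inj prim_root_exp4_mem card_fourth_powers).
by apply: eq_bigr => t _; rewrite mulnA.
Qed.

Lemma prod_charpow_fourth_powers (a : 'I_m -> F) :
  injective a -> (forall i, a i \in S4) -> \prod_i R (a i) = 1.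
Proof.
move=> a_inj a_S4; rewrite -(big_enum_set _ _ a_inj a_S4 card_fourth_powers).
rewrite -(big_morph _ (charpowM chi_gen r) (charpow1 chi_gen r)).
by rewrite prod_fourth_powers charpow1.
Qed.

End FourthPowers.

Theorem theorem1p2 (F : finFieldType) (chi : F -> algC) (r : nat)
    (a : 'I_((#|F| - 1) %/ 4) -> F) :
  (#|F| %% 8 = 5)%N ->
  char_generator chi ->
  (1 <= r <= #|F| - 2)%N ->
  injective a ->
  (forall x : F, D4 x <-> exists i, a i = x) ->
  \det (\matrix_(i, j) (charpow chi r (a i + a j) + charpow chi r (a i - a j)))
  = (-1) ^+ r * (#|F|%:R / 2) ^+ ((#|F| - 1) %/ 4) *
    \prod_(0 <= k < ((#|F| - 5) %/ 4).+1)
      hyp2F1 chi (charinv (charpow chi r)) (charpow chi (4 * k))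
             (charpow chi (4 * k + r)) (-1).
Proof.
move=> card_mod8 chi_gen _ a_inj a_D4.
set m := ((#|F| - 1) %/ 4)%N.
have [g g_prim] := finField_prim_root_exists F.
have card_F : #|F|.-1 = (4 * m)%N by rewrite /m; lia.
have m_odd : odd m by rewrite (_ : m = (#|F| %/ 8).*2.+1) ?odd_double // /m; lia.
have a_S4 i : a i \in fourth_powers F by apply/D4_fourth_powers/a_D4; exists i.
have card_S4 := card_fourth_powers g_prim card_F m_odd.
rewrite (det_sum_diff_mx _ chi_gen (fourth_powers_neq0 F)
  (N1_notin_fourth_powers g_prim card_F m_odd) (@fourth_powers_div F) a_inj a_S4 card_S4).
rewrite (prod_charpow_fourth_powers g_prim card_F m_odd r chi_gen a_inj a_S4) mul1r.
rewrite (_ : ((#|F| - 5) %/ 4).+1 = m); last by rewrite /m; lia.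
have chiN1_exp k : chi (-1) ^+ (4 * k + r) = (-1) ^+ r.
  by rewrite (chiN1 chi_gen (N1_neq1 g_prim card_F m_odd)) exprD -(signr_odd _ (4 * k)) oddM /= mul1r.
under [in LHS]eq_bigr do rewrite (sum_diff_eigenvalue_fourth_powers g_prim card_F m_odd r chi_gen).
rewrite big_mkord; under [in RHS]eq_bigr do rewrite hyp2F1_at_N1 // chiN1_exp.
rewrite !big_split /= !prodr_const !card_ord mulrA; congr (_ * _).
have sign_cancel : (-1) ^+ r * ((-1) ^+ r) ^+ m = 1 :> algC.
  by rewrite -exprS -exprM -signr_odd oddM /= m_odd andbF.
rewrite -/m -mulrA -!exprMn (_ : _ / 2 * _ = (-1) ^+ r / 2); last by field; rewrite natr_card_neq0.
by rewrite exprMn mulrA sign_cancel mul1r.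
Qed.
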